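(* Let $\beta\in\mathbb{C}$ be a root of $X^4+2$ and $K=\mathbb{Q}(\beta)$ with ring of integers $\mathcal{O}_K$. For every $d\in\mathbb{Z}$, every prime ideal of $\mathcal{O}_K$ dividing $d-\beta$ has residue degree $1$. *)

From HB Require Import structures.
From mathcomp Require Import all_boot all_order all_algebra all_field.
Set Implicit Arguments. Unset Strict Implicit. Unset Printing Implicit Defensive.
Import Order.TTheory GRing.Theory Num.Theory.
Local Open Scope ring_scope.

(* K = Q(beta) = Q[beta]  (beta is algebraic) *)
Definition inK (beta : algC) (x : algC) : Prop :=
  exists p : {poly rat}, x = (map_poly ratr p).[beta].

Definition inOK (beta : algC) (x : algC) : Prop := inK beta x /\ x \in Aint.

Definition is_ideal_OK (beta : algC) (I : algC -> Prop) : Prop :=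
  [/\ forall x, I x -> inOK beta x,
      I 0,
      forall x y, I x -> I y -> I (x + y)
    & forall a x, inOK beta a -> I x -> I (a * x)].

Definition is_prime_ideal_OK (beta : algC) (I : algC -> Prop) : Prop :=
  [/\ is_ideal_OK beta I,
      ~ I 1
    & forall a b, inOK beta a -> inOK beta b -> I (a * b) -> I a \/ I b].

(* O_K/P is spanned over its prime field F_p (image of Z) by f elements *)
Definition residue_spanned (beta : algC) (P : algC -> Prop) (f : nat) : Prop :=
  exists y : 'I_f -> algC, (forall i, inOK beta (y i)) /\
    forall x, inOK beta x ->
      exists c : 'I_f -> int, P (x - \sum_(i < f) (c i)%:~R * y i).

(* residue degree f = dim_{F_p} (O_K/P) = minimal size of a spanning family *)
Definition has_residue_degree (beta : algC) (P : algC -> Prop) (f : nat) : Prop :=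
  residue_spanned beta P f /\ forall g, residue_spanned beta P g -> (f <= g)%N.

From HB Require Import structures.
From mathcomp Require Import all_boot all_order all_algebra all_field.
From mathcomp Require Import ring zify.

(* Every element of K = Q(beta) is r(beta) for a unique rational polynomial r of
   degree < 4, since 1, beta, beta^2, beta^3 are linearly independent over Q.  If
   r(beta) is an algebraic integer, so is r(w) for every root w = i^k beta of
   X^4 + 2, and summing r(w) w^m over these roots shows that 8 r has integer
   coefficients.  As X^4 + 2 is Eisenstein at 2, the factors 2 can then be removed
   one at a time, so O_K = Z[beta].  Modulo a prime P containing d - beta, every
   q(beta) with q in Z[X] is congruent to the integer q(d), so O_K/P is spanned by 1;
   the empty family cannot span since 1 is not in P. *)

Set Implicit Arguments.
Unset Strict Implicit.
Unset Printing Implicit Defensive.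

Import GRing.Theory Num.Theory.
Local Open Scope ring_scope.

Local Notation QtoC := (ratr : rat -> algC).
Local Notation pQ := (map_poly QtoC).

Lemma Aint_XnsubC (n : nat) (c w : algC) :
  (0 < n)%N -> c \in Num.int -> w ^+ n = c -> w \in Aint.
Proof.
move=> n_gt0 Zc wn; apply: (@root_monic_Aint ('X^n - c%:P)).
- by rewrite rootE !hornerE wn subrr.
- exact: monicXnsubC.
- by rewrite polyOverXnsubC.
Qed.

Lemma prime_dvdzX (p k : nat) (m : int) :
  prime p -> (0 < k)%N -> (p %| m ^+ k)%Z = (p %| m)%Z.
Proof. by move=> p_pr k_gt0; rewrite !dvdzE abszX Euclid_dvdX ?k_gt0 ?andbT. Qed.

Lemma Crat_sqr_neq2 (t : algC) : t \in Crat -> t ^+ 2 != 2.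
Proof.
move=> Qt; apply/eqP=> t2.
have /intrP[m Dt] : t \in Num.int.
  by apply: (Cint_rat_Aint Qt (Aint_XnsubC _ _ t2)); rewrite ?rpred_nat.
move: t2; rewrite Dt -rmorphXn /= -[2 : algC]/(2%:~R) => /intr_inj/(congr1 absz).
by rewrite abszX; move: (absz m) => n n2; have [n_le1|n_gt1] := leqP n 1; nia.
Qed.

Lemma Crat_lin_indep (w a c : algC) : w \notin Crat -> a \in Crat -> c \in Crat ->
  a + c * w = 0 -> a = 0 /\ c = 0.
Proof.
move=> wNQ Qa Qc acw0; have [c0|c_neq0] := eqVneq c 0.
  by move: acw0; rewrite c0 mul0r addr0.
suff: w \in Crat by rewrite (negPf wNQ).
have Da : a = - (c * w) by apply/eqP; rewrite -addr_eq0 acw0.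
have ->: w = - a / c by rewrite Da opprK mulrC mulKf.
by rewrite rpredM ?rpredN ?rpredV.
Qed.

Lemma horner_size4 (R : nzSemiRingType) (q : {poly R}) (w : R) : (size q <= 4)%N ->
  q.[w] = q`_0 + q`_1 * w + q`_2 * w ^+ 2 + q`_3 * w ^+ 3.
Proof.
move=> q_le4; rewrite (horner_coef_wide _ q_le4) !big_ord_recl big_ord0.
by rewrite expr0 expr1 mulr1 addr0 !addrA.
Qed.

Definition X4add2 : {poly rat} := 'X^4 + 2%:P.

Lemma size_modp_X4add2 (h : {poly rat}) : (size (h %% X4add2)%R <= 4)%N.
Proof. by have := ltn_modp h X4add2; rewrite -size_poly_eq0 !size_XnaddC. Qed.

Lemma horner_X4add2 (w : algC) : (pQ X4add2).[w] = w ^+ 4 + 2.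
Proof.
by rewrite /X4add2 rmorphD /= map_polyXn map_polyC hornerD hornerXn hornerC /= rmorph_nat.
Qed.

Lemma horner_modp_X4add2 (h : {poly rat}) (w : algC) :
  w ^+ 4 = -2 -> (pQ h).[w] = (pQ (h %% X4add2)).[w].
Proof.
move=> w4; rewrite {1}(divp_eq h X4add2) rmorphD rmorphM /= hornerD hornerM.
by rewrite horner_X4add2 w4 addNr mulr0 add0r.
Qed.

Lemma horner_root_X4add2 (h : {poly rat}) (w : algC) : w ^+ 4 = -2 ->
  (pQ h).[w] = QtoC (h %% X4add2)`_0 + QtoC (h %% X4add2)`_1 * w
             + QtoC (h %% X4add2)`_2 * w ^+ 2 + QtoC (h %% X4add2)`_3 * w ^+ 3.
Proof.
move=> w4; rewrite horner_modp_X4add2 // horner_size4 ?size_map_poly ?size_modp_X4add2 //.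
by rewrite !coef_map.
Qed.

Section PureQuarticRoot.

Variable beta : algC.
Hypothesis beta4 : beta ^+ 4 = -2.

Lemma beta_Aint : beta \in Aint.
Proof. by apply: (Aint_XnsubC _ _ beta4); rewrite ?rpredN ?rpred_nat. Qed.

Lemma beta2_notin_Crat : beta ^+ 2 \notin Crat.
Proof.
apply/negP=> /Creal_Crat; rewrite realEsqr -exprM beta4 oppr_ge0.
by rewrite real_leNgt ?ltr0n ?realn // real0.
Qed.

Lemma beta_neq_Crat_beta2 (a b : algC) :
  a \in Crat -> b \in Crat -> beta != a + b * beta ^+ 2.
Proof.
move=> Qa Qb; apply/eqP=> Dbeta.
have [a2 ab] : a ^+ 2 - 2 * b ^+ 2 = 0 /\ 2 * a * b - 1 = 0.
  apply: (Crat_lin_indep beta2_notin_Crat); rewrite ?rpredB ?rpredM ?rpredX ?rpred_nat //.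
  transitivity ((a + b * beta ^+ 2) ^+ 2 - beta ^+ 2 - b ^+ 2 * (beta ^+ 4 + 2)); first by ring.
  by rewrite -Dbeta beta4 addNr mulr0 subrr subr0.
have b_neq0 : b != 0 by apply: contra_eq_neq ab => ->; rewrite mulr0 sub0r oppr_eq0 oner_eq0.
have Qab : a / b \in Crat by rewrite rpredM ?rpredV.
have Da2 : a ^+ 2 = 2 * b ^+ 2 by apply/eqP; rewrite -subr_eq0 a2.
by move/negP: (Crat_sqr_neq2 Qab); apply; rewrite expr_div_n Da2 mulfK ?expf_neq0.
Qed.

Lemma Crat_free_beta (s0 s1 s2 s3 : algC) :
  s0 \in Crat -> s1 \in Crat -> s2 \in Crat -> s3 \in Crat ->
  s0 + s1 * beta + s2 * beta ^+ 2 + s3 * beta ^+ 3 = 0 ->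
  [/\ s0 = 0, s1 = 0, s2 = 0 & s3 = 0].
Proof.
move=> Q0 Q1 Q2 Q3 sum0; have lin_indep := Crat_lin_indep beta2_notin_Crat.
have [B0|B_neq0] := eqVneq (s1 + s3 * beta ^+ 2) 0.
  have [s1_0 s3_0] := lin_indep _ _ Q1 Q3 B0.
  have [s0_0 s2_0] : s0 = 0 /\ s2 = 0.
    by apply: lin_indep => //; rewrite -sum0 s1_0 s3_0; ring.
  by [].
(* Otherwise beta = - A / B with A = s0 + s2 beta^2 and B = s1 + s3 beta^2;
   multiplying by B' = s1 - s3 beta^2, with B B' = N rational, puts beta in
   Q + Q beta^2. *)
exfalso; set B' := s1 - s3 * beta ^+ 2.
have B'_neq0 : B' != 0.
  apply: contra_neq B_neq0 => B'0.
  have [s1_0 /eqP] : s1 = 0 /\ - s3 = 0.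
    by apply: lin_indep; rewrite ?rpredN // -B'0 /B'; ring.
  by rewrite oppr_eq0 s1_0 => /eqP->; rewrite mul0r addr0.
set N := s1 ^+ 2 + 2 * s3 ^+ 2.
have DN : N = (s1 + s3 * beta ^+ 2) * B' by rewrite /N /B'; ring: beta4.
have N_neq0 : N != 0 by rewrite DN mulf_neq0.
have beta_B : beta * (s1 + s3 * beta ^+ 2) = - (s0 + s2 * beta ^+ 2).
  by rewrite -[RHS]add0r -sum0; ring.
have QN : N \in Crat by rewrite rpredD ?rpredM ?rpredX ?rpred_nat.
have Qa : - (s0 * s1 + 2 * s2 * s3) / N \in Crat.
  by rewrite rpredM ?rpredN ?rpredD ?rpredM ?rpredV ?rpred_nat.
have Qb : (s0 * s3 - s1 * s2) / N \in Crat by rewrite rpredM ?rpredB ?rpredM ?rpredV.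
move/eqP: (beta_neq_Crat_beta2 Qa Qb); apply.
apply: (mulIf N_neq0); rewrite {1}DN mulrA beta_B /B'.
by field: beta4.
Qed.

Lemma root_X4add2_conj (h : {poly rat}) (w : algC) : w ^+ 4 = -2 ->
  (pQ h).[beta] = 0 -> (pQ h).[w] = 0.
Proof.
move=> w4; rewrite !horner_root_X4add2 //.
case/(Crat_free_beta (Crat_rat _) (Crat_rat _) (Crat_rat _) (Crat_rat _)).
by move=> -> -> -> ->; ring.
Qed.

Lemma Aint_X4add2_conj (p : {poly rat}) (w : algC) : w ^+ 4 = -2 ->
  (pQ p).[beta] \in Aint -> (pQ p).[w] \in Aint.
Proof.
move=> w4 Ax; have [q [Dq _] _] := minCpolyP (pQ p).[beta].
apply: (root_monic_Aint _ (minCpoly_monic _) Ax).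
rewrite /root Dq -horner_comp -map_comp_poly; apply/eqP/(root_X4add2_conj w4).
by rewrite map_comp_poly horner_comp -Dq; apply/eqP/root_minCpoly.
Qed.

Lemma trace_coef_int (s0 s1 s2 s3 : algC) :
  s0 \in Crat -> s1 \in Crat -> s2 \in Crat -> s3 \in Crat ->
  (forall w, w ^+ 4 = -2 -> s0 + s1 * w + s2 * w ^+ 2 + s3 * w ^+ 3 \in Aint) ->
  [/\ 8 * s0 \in Num.int, 8 * s1 \in Num.int, 8 * s2 \in Num.int & 8 * s3 \in Num.int].
Proof.
move=> Q0 Q1 Q2 Q3 yA; set y := fun w => s0 + s1 * w + s2 * w ^+ 2 + s3 * w ^+ 3.
have i2 : 'i ^+ 2 = -1 :> algC := sqrCi _.
have iA : 'i \in Aint by apply: (Aint_XnsubC _ _ i2); rewrite ?rpredN ?rpred1.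
have conj4 k : ('i ^+ k * beta) ^+ 4 = -2.
  by rewrite exprMn -exprM mulnC exprM (exprM _ 2 2) i2 sqrrN !expr1n mul1r.
pose T m := \sum_(k < 4) y ('i ^+ k * beta) * ('i ^+ k * beta) ^+ m.
have ZT m x : T m = x -> x \in Crat -> x \in Num.int.
  move=> <- QT; apply: Cint_rat_Aint QT _; apply: rpred_sum => k _.
  by rewrite rpredM ?rpredX ?yA ?conj4 ?rpredM ?rpredX ?beta_Aint.
have ZTN m x : T m = - (8 * x) -> x \in Crat -> 8 * x \in Num.int.
  by move=> Tm Qx; rewrite -rpredN; apply: (ZT m) => //; rewrite rpredN rpredM ?rpred_nat.
(* T 0 = 4 s0, while T m = -8 s_(4-m) for m = 1, 2, 3. *)
have Z0 : 4 * s0 \in Num.int.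
  by apply: (ZT 0); rewrite ?rpredM ?rpred_nat // /T !big_ord_recl big_ord0 /y /=; ring: i2.
split.
- by rewrite (_ : 8 * s0 = 2 * (4 * s0)) 1?rpredM ?rpred_nat //; ring.
- by apply: (ZTN 3) => //; rewrite /T !big_ord_recl big_ord0 /y /=; ring: i2 beta4.
- by apply: (ZTN 2) => //; rewrite /T !big_ord_recl big_ord0 /y /=; ring: i2 beta4.
- by apply: (ZTN 1) => //; rewrite /T !big_ord_recl big_ord0 /y /=; ring: i2 beta4.
Qed.

Lemma Aint_half_cube (c : algC) :
  2 * c \in Num.int -> c * beta ^+ 3 \in Aint -> c \in Num.int.
Proof.
case/intrP=> m Dm cA; have Dc : c = m%:~R / 2 by rewrite -Dm mulrC mulKf ?pnatr_eq0.
(* (c beta^3)^4 = - m^4 / 2, so 2 divides m^4. *)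
have /intrP[k Dk] : ((m ^+ 4)%:~R / 2 : algC) \in Num.int.
  apply: Cint_rat_Aint; first by rewrite rpredM ?rpred_int ?rpredV ?rpred_nat.
  have -> : (m ^+ 4)%:~R / 2 = - (c * beta ^+ 3) ^+ 4 :> algC.
    by rewrite Dc rmorphXn /=; field: beta4.
  by rewrite rpredN rpredX.
have : (2%N %| m ^+ 4)%Z.
  apply/dvdzP; exists k; apply: (@intr_inj algC).
  by rewrite [RHS]intrM -Dk divfK ?pnatr_eq0.
rewrite prime_dvdzX // => /dvdzP[j Dj].
by rewrite Dc Dj intrM mulfK ?pnatr_eq0 ?rpred_int.
Qed.

Ltac Aint_closure :=
  by repeat first [assumption | apply: rpredB | apply: rpredD | apply: rpredM | apply: rpredX].

Lemma Aint_half_coef (t0 t1 t2 t3 : algC) :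
  [/\ 2 * t0 \in Num.int, 2 * t1 \in Num.int, 2 * t2 \in Num.int & 2 * t3 \in Num.int] ->
  t0 + t1 * beta + t2 * beta ^+ 2 + t3 * beta ^+ 3 \in Aint ->
  [/\ t0 \in Num.int, t1 \in Num.int, t2 \in Num.int & t3 \in Num.int].
Proof.
case=> Z0 Z1 Z2 Z3; set y := _ + t3 * _ => yA.
have bA := beta_Aint; have A1 := Aint_Cint Z1.
have A2 := Aint_Cint Z2; have A3 := Aint_Cint Z3.
(* beta^(3-j) (t_j beta^j + ... + t3 beta^3) = t_j beta^3 - 2 (t_(j+1) + ...)
   and every 2 t_i is an integer. *)
have Zt0 : t0 \in Num.int.
  apply: Aint_half_cube Z0 _.
  have -> : t0 * beta ^+ 3 = y * beta ^+ 3 + 2 * t1 + 2 * t2 * beta + 2 * t3 * beta ^+ 2.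
    by rewrite /y; ring: beta4.
  Aint_closure.
have At0 := Aint_Cint Zt0.
have Zt1 : t1 \in Num.int.
  apply: Aint_half_cube Z1 _.
  have -> : t1 * beta ^+ 3 = (y - t0) * beta ^+ 2 + 2 * t2 + 2 * t3 * beta.
    by rewrite /y; ring: beta4.
  Aint_closure.
have At1 := Aint_Cint Zt1.
have Zt2 : t2 \in Num.int.
  apply: Aint_half_cube Z2 _.
  have -> : t2 * beta ^+ 3 = (y - t0 - t1 * beta) * beta + 2 * t3.
    by rewrite /y; ring: beta4.
  Aint_closure.
have At2 := Aint_Cint Zt2.
split=> //; apply: Aint_half_cube Z3 _.
have -> : t3 * beta ^+ 3 = y - t0 - t1 * beta - t2 * beta ^+ 2 by rewrite /y; ring.
Aint_closure.
Qed.

Lemma Aint_pow2_coef (k : nat) (t0 t1 t2 t3 : algC) :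
  [/\ 2 ^+ k * t0 \in Num.int, 2 ^+ k * t1 \in Num.int,
      2 ^+ k * t2 \in Num.int & 2 ^+ k * t3 \in Num.int] ->
  t0 + t1 * beta + t2 * beta ^+ 2 + t3 * beta ^+ 3 \in Aint ->
  [/\ t0 \in Num.int, t1 \in Num.int, t2 \in Num.int & t3 \in Num.int].
Proof.
elim: k t0 t1 t2 t3 => [|k IHk] t0 t1 t2 t3; first by rewrite !expr0 !mul1r.
rewrite !(exprSr 2 k) -!mulrA => Zt yA; apply: (Aint_half_coef _ yA); apply: IHk Zt _.
rewrite (_ : _ + _ = 2 * (t0 + t1 * beta + t2 * beta ^+ 2 + t3 * beta ^+ 3)); last by ring.
by rewrite rpredM ?rpred_nat.
Qed.

Lemma inOK_horner_int (q : {poly int}) : inOK beta (map_poly intr q).[beta].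
Proof.
split; last by apply: rpred_horner beta_Aint; apply/polyOverP=> i; rewrite coef_map Aint_int.
exists (map_poly intr q); rewrite -map_poly_comp; congr (_.[_]).
by apply: eq_map_poly => n /=; rewrite ratr_int.
Qed.

Lemma inOK_Zbeta (x : algC) :
  inOK beta x -> exists q : {poly int}, x = (map_poly intr q).[beta].
Proof.
case=> [[p ->] pA]; set r := p %% X4add2.
have Zr : [/\ QtoC r`_0 \in Num.int, QtoC r`_1 \in Num.int,
              QtoC r`_2 \in Num.int & QtoC r`_3 \in Num.int].
  apply: (Aint_pow2_coef (k := 3)); last by rewrite -horner_root_X4add2.
  rewrite -natrX; apply: trace_coef_int; rewrite ?Crat_rat // => w w4.
  by rewrite -horner_root_X4add2 // (Aint_X4add2_conj w4).
have /floorpP[q Dq] : pQ r \is a polyOver Num.int.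
  apply/polyOverP=> -[|[|[|[|j]]]]; rewrite coef_map; case: Zr => //= *.
  by rewrite nth_default ?rmorph0 // (leq_trans (size_modp_X4add2 p)).
by exists q; rewrite -Dq -horner_modp_X4add2.
Qed.

Lemma ideal_residue_int (P : algC -> Prop) (d : int) :
  is_ideal_OK beta P -> P (d%:~R - beta) ->
  forall x, inOK beta x -> exists c : int, P (x - c%:~R).
Proof.
case=> _ _ _ P_mul Pd x /inOK_Zbeta[q ->]; exists q.[d].
have /factor_theorem[s Ds] : root (q - q.[d]%:P) d by rewrite rootE !hornerE subrr.
suff -> : (map_poly intr q).[beta] - (q.[d])%:~R
          = (map_poly intr (- s)).[beta] * (d%:~R - beta).
  exact: P_mul (inOK_horner_int _) Pd.
move/(congr1 (fun p => (map_poly intr p).[beta] : algC)): Ds.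
by rewrite !(rmorphB, rmorphM, rmorphN) /= !map_polyC map_polyX !hornerE => ->; ring.
Qed.

End PureQuarticRoot.

Theorem proposition4 (beta : algC) (hbeta : beta ^+ 4 + 2 = 0) (d : int)
  (P : algC -> Prop) (hP : is_prime_ideal_OK beta P)
  (hdiv : P (d%:~R - beta)) :
  has_residue_degree beta P 1.
Proof.
have beta4 : beta ^+ 4 = -2 by apply/eqP; rewrite -addr_eq0 hbeta.
have [P_ideal P1 _] := hP.
have OK1 : inOK beta 1 by have := inOK_horner_int beta4 1; rewrite rmorph1 hornerC.
split.
- exists (fun=> 1); split=> // x /(ideal_residue_int beta4 P_ideal hdiv)[c Pc].
  by exists (fun=> c); rewrite big_ord1 mulr1.
- by move=> [|g] // [y [_ /(_ 1 OK1)[c]]]; rewrite big_ord0 subr0 => /P1.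
Qed.
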